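(* Let $\tau$ be a continuous distributive triangle function on $\Delta^+$, $\Sigma$ a $\sigma$-ring of subsets of $\Omega\ne\emptyset$, $\gamma$ a $\tau$-decomposable measure on $\Sigma$ continuous from below, $E\in\Sigma$, and $f,g:\Omega\to[0,+\infty]$ measurable functions that are $\gamma$-integrable on $E$ and satisfy $f=g$ a.e. on $E$. Then $\int_E f\,d\gamma=\int_E g\,d\gamma$.
   Context: $\Delta^+$: functions $F:[-\infty,+\infty]\to[0,1]$ non-decreasing, left-continuous on $\mathbb{R}$, $F(x)=0$ for $x\le0$, $F(+\infty)=1$, ordered pointwise; $\varepsilon_a(x)=1$ if $x>a$, else $0$. Triangle function: symmetric, associative $\tau:\Delta^+\times\Delta^+\to\Delta^+$, non-decreasing in each variable, identity $\varepsilon_0$; $G\oplus H=\tau(G,H)$, $\bigoplus_{k=1}^nG_k=\tau(G_1,\bigoplus_{k=2}^nG_k)$. $c\odot G=\varepsilon_0$ if $c=0$, $(c\odot G)(x)=G(x/c)$ if $c>0$; $\tau$ distributive if $c\odot(G\oplus H)=(c\odot G)\oplus(c\odot H)$ for all $c\ge0$. Convergence in $\Delta^+$ is weak convergence; $\tau$ continuous if continuous for it. $\tau$-decomposable measure on a ring $\Sigma$: $\gamma:\Sigma\to\Delta^+$, $\gamma_\emptyset=\varepsilon_0$, $\gamma_{E\cup F}=\tau(\gamma_E,\gamma_F)$ for disjoint $E,F$; continuous from below: $\gamma_{E_n}\to\gamma_E$ whenever $E_n\subseteq E_{n+1}$, $\bigcup E_n=E$ in $\Sigma$. A set $F\in\Sigma$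 is $\gamma$-null if $\gamma_F=\varepsilon_0$. $f=g$ a.e. on $S$ means there is a $\gamma$-null $F$ with $f(x)=g(x)$ for all $x\in S\setminus F$. Simple function $\sum_{i=1}^nx_i\chi_{E_i}$ ($x_i\in[0,\infty)$, $E_i\in\Sigma$ pairwise disjoint), $\int_Ef\,d\gamma=\bigoplus_ix_i\odot\gamma_{E\cap E_i}$. Measurable: pointwise limit of simple functions. $\mathcal S_{f,E}$: simple $\mathfrak f\le f$ on $E$. $f$ is $\gamma$-integrable on $E$ if some $H\in\Delta^+$ satisfies $\int_E\mathfrak f\,d\gamma\ge H$ for all $\mathfrak f\in\mathcal S_{f,E}$; then $\int_Ef\,d\gamma=\inf\{\int_E\mathfrak f\,d\gamma:\mathfrak f\in\mathcal S_{f,E}\}$ in $(\Delta^+,\le)$. *)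

From Stdlib Require Import Reals Lra List ClassicalEpsilon.
From Coquelicot Require Import Coquelicot.
Open Scope R_scope.

(** * Distance distribution functions Delta^+.
    An element F : [-oo,+oo] -> [0,1] is represented by its restriction to R
    (its values at -oo and +oo are forced to be 0 and 1). *)
Definition DeltaPlus (F : R -> R) : Prop :=
  (forall x, 0 <= F x <= 1) /\
  (forall x y, x <= y -> F x <= F y) /\
  (forall x, forall eps, 0 < eps -> exists delta, 0 < delta /\
      forall y, x - delta < y < x -> Rabs (F y - F x) < eps) /\
  (forall x, x <= 0 -> F x = 0).

Definition dle (F G : R -> R) : Prop := forall x, F x <= G x.

Definition eps_ (a : R) : R -> R := fun x => if Rlt_dec a x then 1 else 0.
Definition eps0 : R -> R := eps_ 0.

Definition wconv (Fn : nat -> R -> R) (F : R -> R) : Prop :=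
  forall x, continuity_pt F x -> Un_cv (fun n => Fn n x) (F x).

Definition smul (c : R) (G : R -> R) : R -> R :=
  if Req_EM_T c 0 then eps0 else fun x => G (x / c).

Definition triangle_function (tau : (R -> R) -> (R -> R) -> (R -> R)) : Prop :=
  (forall F G, DeltaPlus F -> DeltaPlus G -> DeltaPlus (tau F G)) /\
  (forall F G, DeltaPlus F -> DeltaPlus G -> tau F G = tau G F) /\
  (forall F G H, DeltaPlus F -> DeltaPlus G -> DeltaPlus H ->
      tau F (tau G H) = tau (tau F G) H) /\
  (forall F F' G, DeltaPlus F -> DeltaPlus F' -> DeltaPlus G ->
      dle F F' -> dle (tau F G) (tau F' G)) /\
  (forall F G G', DeltaPlus F -> DeltaPlus G -> DeltaPlus G' ->
      dle G G' -> dle (tau F G) (tau F G')) /\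
  (forall F, DeltaPlus F -> tau F eps0 = F).

Definition tau_distributive (tau : (R -> R) -> (R -> R) -> (R -> R)) : Prop :=
  forall c F G, 0 <= c -> DeltaPlus F -> DeltaPlus G ->
    smul c (tau F G) = tau (smul c F) (smul c G).

Definition tau_continuous (tau : (R -> R) -> (R -> R) -> (R -> R)) : Prop :=
  forall (Fn Gn : nat -> R -> R) F G,
    (forall n, DeltaPlus (Fn n)) -> (forall n, DeltaPlus (Gn n)) ->
    DeltaPlus F -> DeltaPlus G ->
    wconv Fn F -> wconv Gn G -> wconv (fun n => tau (Fn n) (Gn n)) (tau F G).

Section Sets.
Context {Omega : Type}.

Definition set0 : Omega -> Prop := fun _ => False.
Definition setU (A B : Omega -> Prop) : Omega -> Prop := fun w => A w \/ B w.
Definition setI (A B : Omega -> Prop) : Omega -> Prop := fun w => A w /\ B w.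
Definition setD (A B : Omega -> Prop) : Omega -> Prop := fun w => A w /\ ~ B w.
Definition disjoint (A B : Omega -> Prop) : Prop := forall w, A w -> B w -> False.

Definition sigma_ring (Sigma : (Omega -> Prop) -> Prop) : Prop :=
  Sigma set0 /\
  (forall A B, Sigma A -> Sigma B -> Sigma (setD A B)) /\
  (forall A : nat -> Omega -> Prop, (forall n, Sigma (A n)) ->
      Sigma (fun w => exists n, A n w)).

Definition decomposable_measure (tau : (R -> R) -> (R -> R) -> (R -> R))
  (Sigma : (Omega -> Prop) -> Prop) (gamma : (Omega -> Prop) -> R -> R) : Prop :=
  (forall E, Sigma E -> DeltaPlus (gamma E)) /\
  gamma set0 = eps0 /\
  (forall E F, Sigma E -> Sigma F -> disjoint E F ->
      gamma (setU E F) = tau (gamma E) (gamma F)).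

Definition continuous_from_below (Sigma : (Omega -> Prop) -> Prop)
  (gamma : (Omega -> Prop) -> R -> R) : Prop :=
  forall (En : nat -> Omega -> Prop) E,
    (forall n, Sigma (En n)) -> Sigma E ->
    (forall n w, En n w -> En (S n) w) ->
    (forall w, E w <-> exists n, En n w) ->
    wconv (fun n => gamma (En n)) (gamma E).

Definition null_set (Sigma : (Omega -> Prop) -> Prop)
  (gamma : (Omega -> Prop) -> R -> R) (F : Omega -> Prop) : Prop :=
  Sigma F /\ gamma F = eps0.

Definition ae_eq (Sigma : (Omega -> Prop) -> Prop)
  (gamma : (Omega -> Prop) -> R -> R) (S : Omega -> Prop) (f g : Omega -> Rbar) : Prop :=
  exists F, null_set Sigma gamma F /\ forall w, S w -> ~ F w -> f w = g w.

(** * Simple functions, given by a representation [(x_1,E_1);...;(x_n,E_n)] *)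
Definition simple_rep (Sigma : (Omega -> Prop) -> Prop)
  (s : list (R * (Omega -> Prop))) : Prop :=
  (forall p, In p s -> 0 <= fst p /\ Sigma (snd p)) /\
  (forall i j, (i < length s)%nat -> (j < length s)%nat -> i <> j ->
      disjoint (snd (nth i s (0, set0))) (snd (nth j s (0, set0)))).

Definition simple_val (s : list (R * (Omega -> Prop))) (w : Omega) : R :=
  fold_right (fun p acc =>
    (if excluded_middle_informative (snd p w) then fst p else 0) + acc) 0 s.

Definition bigoplus (tau : (R -> R) -> (R -> R) -> (R -> R)) (l : list (R -> R)) : R -> R :=
  fold_right tau eps0 l.

Definition simple_integral (tau : (R -> R) -> (R -> R) -> (R -> R))
  (gamma : (Omega -> Prop) -> R -> R) (E : Omega -> Prop)
  (s : list (R * (Omega -> Prop))) : R -> R :=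
  bigoplus tau (map (fun p => smul (fst p) (gamma (setI E (snd p)))) s).

Definition measurable_fun (Sigma : (Omega -> Prop) -> Prop) (f : Omega -> Rbar) : Prop :=
  exists s : nat -> list (R * (Omega -> Prop)),
    (forall n, simple_rep Sigma (s n)) /\
    forall w, is_lim_seq (fun n => simple_val (s n) w) (f w).

Definition simple_below (Sigma : (Omega -> Prop) -> Prop) (f : Omega -> Rbar)
  (E : Omega -> Prop) (s : list (R * (Omega -> Prop))) : Prop :=
  simple_rep Sigma s /\ forall w, E w -> Rbar_le (simple_val s w) (f w).

Definition integrable (tau : (R -> R) -> (R -> R) -> (R -> R))
  (Sigma : (Omega -> Prop) -> Prop) (gamma : (Omega -> Prop) -> R -> R)
  (E : Omega -> Prop) (f : Omega -> Rbar) : Prop :=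
  exists H, DeltaPlus H /\
    forall s, simple_below Sigma f E s -> dle H (simple_integral tau gamma E s).

Definition is_integral (tau : (R -> R) -> (R -> R) -> (R -> R))
  (Sigma : (Omega -> Prop) -> Prop) (gamma : (Omega -> Prop) -> R -> R)
  (E : Omega -> Prop) (f : Omega -> Rbar) (I : R -> R) : Prop :=
  DeltaPlus I /\
  (forall s, simple_below Sigma f E s -> dle I (simple_integral tau gamma E s)) /\
  (forall H, DeltaPlus H ->
     (forall s, simple_below Sigma f E s -> dle H (simple_integral tau gamma E s)) ->
     dle H I).

End Sets.

(* Removing a gamma-null set F from the pieces of a simple function changes
   neither its integral (gamma (B \ F) = gamma B, because null sets are
   absorbed by tau) nor its values off F, and makes it vanish on F.  So every
   simple function below g on E yields one below f on E with the same
   integral: the infimum for f lies below that for g, and symmetrically. *)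
From Stdlib Require Import Reals.
From Coquelicot Require Import Coquelicot.
From Stdlib Require Import Lra List Classical FunctionalExtensionality PropExtensionality ClassicalEpsilon.
Open Scope R_scope.

Lemma dle_antisym (F G : R -> R) : dle F G -> dle G F -> F = G.
Proof.
  intros HFG HGF. apply functional_extensionality; intro x.
  apply Rle_antisym; auto.
Qed.

Lemma dle_eps0 (G : R -> R) : DeltaPlus G -> dle G eps0.
Proof.
  intros [Hbound [_ [_ Hneg]]] x. unfold eps0, eps_.
  destruct (Rlt_dec 0 x).
  - apply Hbound.
  - rewrite Hneg; lra.
Qed.

Section NullSets.
Context {Omega : Type}.
Variable tau : (R -> R) -> (R -> R) -> (R -> R).
Variable Sigma : (Omega -> Prop) -> Prop.
Variable gamma : (Omega -> Prop) -> R -> R.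
Hypothesis Htri : triangle_function tau.
Hypothesis Hsr : sigma_ring Sigma.
Hypothesis Hdec : decomposable_measure tau Sigma gamma.

Lemma set_ext (A B : Omega -> Prop) : (forall w, A w <-> B w) -> A = B.
Proof.
  intro HAB. apply functional_extensionality; intro w.
  apply propositional_extensionality; auto.
Qed.

Lemma sigma_ring_setD A B : Sigma A -> Sigma B -> Sigma (setD A B).
Proof. apply Hsr. Qed.

Lemma sigma_ring_setI A B : Sigma A -> Sigma B -> Sigma (setI A B).
Proof.
  intros HA HB.
  replace (setI A B) with (setD A (setD A B)) by
    (apply set_ext; intro w; unfold setD, setI; split; intros [HwA HwB];
     split; auto; [apply NNPP; tauto | tauto]).
  auto using sigma_ring_setD.
Qed.

Lemma DeltaPlus_eps0 : DeltaPlus eps0.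
Proof. destruct Hdec as [HDP [Hempty _]]. rewrite <- Hempty. apply HDP, Hsr. Qed.

Lemma gamma_split A B : Sigma A -> Sigma B ->
  gamma A = tau (gamma (setI A B)) (gamma (setD A B)).
Proof.
  intros HA HB. destruct Hdec as [_ [_ Hadd]].
  rewrite <- Hadd by (auto using sigma_ring_setI, sigma_ring_setD;
                      intros w [_ HwB] [_ HwnB]; auto).
  f_equal. apply set_ext; intro w; unfold setU, setI, setD.
  destruct (classic (B w)); tauto.
Qed.

Lemma gamma_setI_le A B : Sigma A -> Sigma B -> dle (gamma A) (gamma (setI A B)).
Proof.
  intros HA HB. destruct Hdec as [HDP _].
  destruct Htri as [_ [_ [_ [_ [Hmono Hid]]]]].
  assert (HAB : DeltaPlus (gamma (setI A B))) by auto using sigma_ring_setI.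
  assert (Hle : dle (tau (gamma (setI A B)) (gamma (setD A B)))
                    (tau (gamma (setI A B)) eps0)) by
    (apply Hmono; auto using sigma_ring_setD, DeltaPlus_eps0, dle_eps0).
  rewrite Hid in Hle by exact HAB.
  rewrite (gamma_split A B HA HB). exact Hle.
Qed.

Lemma gamma_setI_null F B : null_set Sigma gamma F -> Sigma B ->
  gamma (setI F B) = eps0.
Proof.
  intros [HF HF0] HB. destruct Hdec as [HDP _].
  apply dle_antisym.
  - auto using dle_eps0, sigma_ring_setI.
  - rewrite <- HF0. auto using gamma_setI_le.
Qed.

Lemma gamma_setD_null B F : null_set Sigma gamma F -> Sigma B ->
  gamma (setD B F) = gamma B.
Proof.
  intros HF HB. destruct Htri as [_ [Hcomm [_ [_ [_ Hid]]]]].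
  destruct Hdec as [HDP _].
  assert (HFs : Sigma F) by apply HF.
  rewrite (gamma_split B F HB HFs).
  replace (setI B F) with (setI F B) by
    (apply set_ext; intro w; unfold setI; tauto).
  rewrite (gamma_setI_null F B HF HB), Hcomm, Hid;
    auto using sigma_ring_setD, DeltaPlus_eps0.
Qed.

Definition simple_setD (F : Omega -> Prop) (s : list (R * (Omega -> Prop))) :=
  map (fun p => (fst p, setD (snd p) F)) s.

Lemma simple_val_setD_in F s w : F w -> simple_val (simple_setD F s) w = 0.
Proof.
  intro Hw. induction s as [|p s IH]; [reflexivity|].
  unfold simple_val in *; simpl in *. rewrite IH.
  destruct excluded_middle_informative as [[_ HnF]|]; [contradiction | lra].
Qed.

Lemma simple_val_setD_out F s w : ~ F w ->
  simple_val (simple_setD F s) w = simple_val s w.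
Proof.
  intro Hw. induction s as [|p s IH]; [reflexivity|].
  unfold simple_val in *; simpl in *. rewrite IH.
  destruct excluded_middle_informative as [[Hp _]|Hnp];
    destruct excluded_middle_informative as [Hp'|Hnp']; auto.
  - contradiction.
  - exfalso; apply Hnp; split; auto.
Qed.

Lemma simple_rep_setD F s : Sigma F -> simple_rep Sigma s ->
  simple_rep Sigma (simple_setD F s).
Proof.
  intros HF [Hpieces Hdisj]. unfold simple_setD. split.
  - intros p Hp. apply in_map_iff in Hp as [q [<- Hq]].
    destruct (Hpieces q Hq). simpl. auto using sigma_ring_setD.
  - intros i j Hi Hj Hij. rewrite length_map in Hi, Hj.
    set (h := fun p : R * (Omega -> Prop) => (fst p, setD (snd p) F)).
    rewrite (nth_indep _ (0, set0) (h (0, set0))) by (rewrite length_map; auto).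
    rewrite (nth_indep _ (0, set0) (h (0, set0)) (n := j)) by (rewrite length_map; auto).
    rewrite !map_nth. unfold h; simpl.
    intros w [Hwi _] [Hwj _]. exact (Hdisj i j Hi Hj Hij w Hwi Hwj).
Qed.

Lemma simple_integral_setD_null E F s : Sigma E -> null_set Sigma gamma F ->
  simple_rep Sigma s ->
  simple_integral tau gamma E (simple_setD F s) = simple_integral tau gamma E s.
Proof.
  intros HE HF [Hpieces _]. unfold simple_integral, simple_setD. f_equal.
  rewrite map_map. apply map_ext_in. intros p Hp; simpl. f_equal.
  replace (setI E (setD (snd p) F)) with (setD (setI E (snd p)) F) by
    (apply set_ext; intro w; unfold setI, setD; tauto).
  apply gamma_setD_null; auto. apply sigma_ring_setI; auto. apply (Hpieces p Hp).
Qed.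

Lemma is_integral_le_ae E f g If Ig : Sigma E -> (forall w, Rbar_le 0 (f w)) ->
  ae_eq Sigma gamma E f g ->
  is_integral tau Sigma gamma E f If -> is_integral tau Sigma gamma E g Ig ->
  dle If Ig.
Proof.
  intros HE Hf [F [HF Hfg]] [HIf [HIf_lb _]] [_ [_ HIg_glb]].
  apply HIg_glb; auto. intros s [Hrep Hle].
  rewrite <- (simple_integral_setD_null E F s) by auto.
  apply HIf_lb. split.
  - apply simple_rep_setD; [apply HF | exact Hrep].
  - intros w Hw. destruct (classic (F w)) as [HFw | HnFw].
    + rewrite simple_val_setD_in; auto.
    + rewrite simple_val_setD_out, Hfg; auto.
Qed.

End NullSets.

Lemma ae_eq_sym {Omega : Type} Sigma gamma (E : Omega -> Prop) f g :
  ae_eq Sigma gamma E f g -> ae_eq Sigma gamma E g f.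
Proof.
  intros [F [HF Hfg]]. exists F; split; auto.
  intros w HE HnF; symmetry; auto.
Qed.

Theorem theorem5p10 (tau : (R -> R) -> (R -> R) -> (R -> R))
  (Omega : Type) (Sigma : (Omega -> Prop) -> Prop)
  (gamma : (Omega -> Prop) -> R -> R) (E : Omega -> Prop) (f g : Omega -> Rbar) :
  triangle_function tau -> tau_continuous tau -> tau_distributive tau ->
  inhabited Omega -> sigma_ring Sigma ->
  decomposable_measure tau Sigma gamma -> continuous_from_below Sigma gamma ->
  Sigma E ->
  (forall w, Rbar_le 0 (f w)) -> (forall w, Rbar_le 0 (g w)) ->
  measurable_fun Sigma f -> measurable_fun Sigma g ->
  integrable tau Sigma gamma E f -> integrable tau Sigma gamma E g ->
  ae_eq Sigma gamma E f g ->
  forall If Ig, is_integral tau Sigma gamma E f If -> is_integral tau Sigma gamma E g Ig ->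
  If = Ig.
Proof.
  intros Htri _ _ _ Hsr Hdec _ HE Hf Hg _ _ _ _ Hae If Ig HIf HIg.
  apply dle_antisym.
  - exact (is_integral_le_ae tau Sigma gamma Htri Hsr Hdec E f g If Ig HE Hf Hae HIf HIg).
  - exact (is_integral_le_ae tau Sigma gamma Htri Hsr Hdec E g f Ig If HE Hg
             (ae_eq_sym Sigma gamma E f g Hae) HIg HIf).
Qed.
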